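(* Let $M$ be a strong module of a dually-CPT poset $\mathbf{P}=(X,P)$. If $M$ is one-sided in some CPT representation of $\mathbf{P}$ and the subposet induced by $M$ has connected comparability graph, then $M$ is a clique module.
   Context: A CPT representation of $\mathbf{P}$ assigns to each $x\in X$ a path $W_x$ of a host tree $T$ with $x<y$ iff $W_x\subsetneq W_y$; $\mathbf{P}$ is dually-CPT if $\mathbf{P}$ and its dual both have such representations. A module is a set $M\subseteq X$ such that each $y\notin M$ is comparable to all or none of the elements of $M$; it is strong if for every module $M'$, $M\cap M'=\emptyset$, $M\subseteq M'$ or $M'\subseteq M$. A strong module is a clique module if the complement of its induced comparability graph is disconnected. In a CPT representation, a set of elements is one-sided if all their paths arrive at (have an endpoint at) a common vertex $a$ of $T$ and all of these paths, except possibly one trivial (single-vertex) path, pass through a common neighbour $b$ of $a$ in $T$. *)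

From mathcomp Require Import all_boot.
Set Implicit Arguments. Unset Strict Implicit. Unset Printing Implicit Defensive.

(* A poset P = (X, P) is given by a finite type X and its strict order
   relation P : rel X  (P x y means x < y). *)
Definition strict_order (X : finType) (P : rel X) : Prop :=
  (forall x, ~~ P x x) /\ (forall x y z, P x y -> P y z -> P x z).

Definition dual_rel (X : finType) (P : rel X) : rel X := fun x y => P y x.

Definition comparable (X : finType) (P : rel X) (x y : X) : bool :=
  P x y || P y x.

Definition is_tree (V : finType) (e : rel V) : Prop :=
  [/\ symmetric e, irreflexive e, (forall u v, connect e u v) &
      (forall (u : V) (s : seq V), uniq (u :: s) -> 2 <= size s ->
          path e u s -> ~~ e (last u s) u)].

Definition is_tree_path (V : finType) (e : rel V) (W : {set V}) : Prop :=
  exists (u : V) (s : seq V), [/\ uniq (u :: s), path e u s & W = [set v in u :: s]].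

(* CPT (containment of paths in a tree) representation of (X,P) on host tree (V,e) *)
Definition CPT_rep (X : finType) (P : rel X) (V : finType) (e : rel V)
    (W : X -> {set V}) : Prop :=
  [/\ is_tree e, (forall x, is_tree_path e (W x)) &
      (forall x y, P x y = (W x \proper W y))].

Definition CPT (X : finType) (P : rel X) : Prop :=
  exists (V : finType) (e : rel V) (W : X -> {set V}), CPT_rep P e W.

Definition dually_CPT (X : finType) (P : rel X) : Prop :=
  CPT P /\ CPT (dual_rel P).

Definition is_module (X : finType) (P : rel X) (M : {set X}) : Prop :=
  forall y, y \notin M ->
    (forall x, x \in M -> comparable P y x) \/
    (forall x, x \in M -> ~~ comparable P y x).

Definition strong_module (X : finType) (P : rel X) (M : {set X}) : Prop :=
  is_module P M /\
  forall M' : {set X}, is_module P M' ->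
    [\/ [disjoint M & M'], M \subset M' | M' \subset M].

Definition comp_graph_on (X : finType) (P : rel X) (M : {set X}) : rel X :=
  fun x y => [&& x \in M, y \in M & comparable P x y].

Definition incomp_graph_on (X : finType) (P : rel X) (M : {set X}) : rel X :=
  fun x y => [&& x \in M, y \in M, x != y & ~~ comparable P x y].

Definition connected_on (X : finType) (g : rel X) (M : {set X}) : Prop :=
  forall u v, u \in M -> v \in M -> connect g u v.

Definition disconnected_on (X : finType) (g : rel X) (M : {set X}) : Prop :=
  exists u v, [/\ u \in M, v \in M & ~~ connect g u v].

Definition clique_module (X : finType) (P : rel X) (M : {set X}) : Prop :=
  strong_module P M /\ disconnected_on (incomp_graph_on P M) M.

Definition endpoint (V : finType) (e : rel V) (W : {set V}) (a : V) : bool :=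
  (a \in W) && (#|[set v in W | e a v]| <= 1).

Definition one_sided (X : finType) (V : finType) (e : rel V)
    (W : X -> {set V}) (M : {set X}) : Prop :=
  exists (a b : V), [/\ e a b,
    (forall x, x \in M -> endpoint e (W x) a),
    (forall x, x \in M -> b \notin W x -> W x = [set a]) &
    (forall x y, x \in M -> y \in M -> b \notin W x -> b \notin W y -> x = y)].

From Pilot Require Import Defs.
From mathcomp Require Import all_boot.
Set Implicit Arguments. Unset Strict Implicit. Unset Printing Implicit Defensive.

(* The paths of M all end at the common vertex a; read from a, two of them lying
   in a third are prefixes of it, hence nested.  Starting from an element u of M
   with shortest path and walking along the connected comparability graph of M,
   this nesting keeps W u inside the current path, so W u is contained in every
   W v.  An element incomparable to u therefore has path exactly W u, so the
   component of u in the incomparability graph only contains elements with path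
   W u, whereas u has a comparable neighbour, whose path differs. *)

Section PathsInTree.
Variables (V : finType) (e : rel V).
Hypothesis e_sym : symmetric e.
Hypothesis e_acyclic : forall (u : V) (s : seq V),
  uniq (u :: s) -> 2 <= size s -> path e u s -> ~~ e (last u s) u.

Lemma subpath_from_prefix a s1 s3 : uniq (a :: s1) -> uniq (a :: s3) ->
  path e a s1 -> path e a s3 -> {subset a :: s1 <= a :: s3} ->
  s1 = take (size s1) s3.
Proof.
elim: s1 a s3 => [|x s1 IH] a s3 U1 U3 P1 P3 S; first by rewrite take0.
move: U1; rewrite cons_uniq in_cons negb_or => /andP[/andP[a'x a's1] U1].
case/andP: P1 => eax P1.
have /predU1P[xa | xs3] : x \in a :: s3 by apply: S; rewrite !inE eqxx orbT.
  by rewrite xa eqxx in a'x.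
case: s3 xs3 U3 P3 S => [//|y s3] xs3 U3 P3 S.
have [exy | x'y] := eqVneq x y; first subst y.
  congr (_ :: _); apply: (IH x) => //; [by case/andP: U3 | by case/andP: P3 |].
  move=> z zs1; have /predU1P[za | //] : z \in a :: x :: s3.
    by apply: S; rewrite inE zs1 orbT.
  by move: zs1; rewrite za inE (negbTE a'x) (negbTE a's1).
have {}xs3 : x \in s3 by case/orP: xs3 => // /eqP xy; rewrite xy eqxx in x'y.
case/splitPr: xs3 U3 P3 => p1 p2 U3 P3.
(* The routes diverge after [a]: [a, y, ..., x] plus the edge [x a] is a cycle. *)
have U : uniq (a :: (y :: p1) ++ [:: x]).
  apply: subseq_uniq U3; rewrite -cat_cons -(cat1s x p2) catA.
  exact: prefix_subseq.
have /e_acyclic : path e a ((y :: p1) ++ [:: x]).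
  by move: P3; rewrite /= !cat_path /= => /and3P[-> -> /andP[-> _]].
by rewrite U size_cat addn1 last_cat /= e_sym eax => /(_ isT isT).
Qed.

Definition path_from (a : V) (W : {set V}) : Prop :=
  exists s, [/\ uniq (a :: s), path e a s & W = [set v in a :: s]].

Lemma endpoint_path_from W a :
  is_tree_path e W -> endpoint e W a -> path_from a W.
Proof.
case=> u [s [U Pu ->]] /andP[]; rewrite inE => /predU1P[-> _ | a_s].
  by exists s.
case/splitPr: a_s U Pu => p1 p2 U Pu.
case: p2 => [|y p2] in U Pu * => deg_a.
  exists (rev (u :: p1)); rewrite -rev_rcons rev_uniq -cats1; split => //.
    have := rev_path e u (rcons p1 a); rewrite last_rcons belast_rcons => ->.
    by rewrite -(eq_path e_sym) -cats1.
  by apply/setP => v; rewrite !inE mem_rev.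
exfalso; move: deg_a; apply/negP; rewrite -ltnNge.
set z := last u p1.
have [eza eay] : e z a /\ e a y.
  by move: Pu; rewrite cat_path => /and3P[_ -> /andP[-> _]].
have z'y : z != y.
  have y_in : y \in [:: a, y & p2] by rewrite !inE eqxx orbT.
  move: U; rewrite -cat_cons cat_uniq => /and3P[_ /hasPn/(_ y y_in) + _].
  by apply: contraNneq => <-; apply: mem_last.
apply: (@leq_trans #|[set z; y]|); first by rewrite cards2 z'y.
apply: subset_leq_card.
apply/subsetP => v; rewrite !inE => /predU1P[-> | /eqP ->].
  by rewrite e_sym eza andbT -in_cons -cat_cons mem_cat mem_last.
by rewrite eay mem_cat !inE eqxx !orbT.
Qed.

Lemma path_from_nested a W1 W2 W3 :
    path_from a W1 -> path_from a W2 -> path_from a W3 ->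
  W1 \subset W3 -> W2 \subset W3 -> (W1 \subset W2) || (W2 \subset W1).
Proof.
move=> [s1 [U1 P1 ->]] [s2 [U2 P2 ->]] [s3 [U3 P3 ->]].
have prefix s : uniq (a :: s) -> path e a s ->
    [set v in a :: s] \subset [set v in a :: s3] ->
  [set v in a :: s] = [set v in a :: take (size s) s3].
  move=> U P /subsetP sub_s; rewrite {1}(subpath_from_prefix U U3 P P3) //.
  by move=> v vs; have := sub_s v; rewrite !inE; apply.
have take_mono i j :
    i <= j -> [set v in a :: take i s3] \subset [set v in a :: take j s3].
  move=> le_ij; apply/subsetP => v; rewrite !inE => /predU1P[-> | vi].
    by rewrite eqxx.
  by rewrite -(take_takel s3 le_ij) in vi; rewrite (mem_take vi) orbT.
move=> /(prefix s1 U1 P1) -> /(prefix s2 U2 P2) ->.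
case: (leqP (size s1) (size s2)) => [/take_mono -> // | /ltnW/take_mono ->].
by rewrite orbT.
Qed.
End PathsInTree.

Lemma comp_graph_on_sym (X : finType) (P : rel X) (M : {set X}) :
  symmetric (comp_graph_on P M).
Proof. by move=> x y; rewrite /comp_graph_on /Defs.comparable andbCA orbC. Qed.

Lemma incomp_graph_on_sym (X : finType) (P : rel X) (M : {set X}) :
  symmetric (incomp_graph_on P M).
Proof.
by move=> x y; rewrite /incomp_graph_on /Defs.comparable andbCA eq_sym orbC.
Qed.

Section LeastPath.
Variables (X V : finType) (P : rel X) (W : X -> {set V}) (M : {set X}).
Hypothesis P_W : forall x y, P x y = (W x \proper W y).
Hypothesis W_nested : forall x y z, x \in M -> y \in M -> z \in M ->
  W x \subset W z -> W y \subset W z -> (W x \subset W y) || (W y \subset W x).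
Hypothesis M_conn : connected_on (comp_graph_on P M) M.

Lemma exists_least_path u0 : u0 \in M ->
  exists2 u, u \in M & {in M, forall v, W u \subset W v}.
Proof.
move=> u0M; have [u uM u_min] := arg_minnP (fun x => #|W x|) u0M.
exists u => // v vM.
have above_u_closed : closed (comp_graph_on P M) [pred w | W u \subset W w].
  apply: (intro_closed (sym_connect_sym (@comp_graph_on_sym X P M))).
  move=> w y /and3P[wM yM].
  rewrite /Defs.comparable !P_W !inE.
  case/orP=> [/proper_sub sub_wy | /proper_sub sub_yw] sub_uw.
    exact: subset_trans sub_wy.
  have /orP[// | sub_yu] := W_nested uM yM wM sub_uw sub_yw.
  by have /eqP <- : W y == W u by rewrite eqEcard sub_yu u_min.
have := closed_connect above_u_closed (M_conn uM vM).
by rewrite !inE subxx => <-.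
Qed.

Lemma incomp_connect_least u v : u \in M -> {in M, forall w, W u \subset W w} ->
  connect (incomp_graph_on P M) u v -> W v = W u.
Proof.
move=> uM u_least uv.
have same_closed : closed (incomp_graph_on P M) [pred w | W w == W u].
  apply: (intro_closed (sym_connect_sym (@incomp_graph_on_sym X P M))).
  move=> w y /and4P[_ yM _]; rewrite /Defs.comparable !P_W !inE negb_or.
  case/andP=> not_wy _ /eqP W_wu.
  by rewrite W_wu properEneq u_least // andbT negbK eq_sym in not_wy.
by have := closed_connect same_closed uv; rewrite !inE eqxx => /esym/eqP.
Qed.

Lemma exists_other_path u :
  2 <= #|M| -> u \in M -> exists2 v, v \in M & W v != W u.
Proof.
move=> M_ge2 uM; have [v /setD1P[v'u vM]] : exists v, v \in M :\ u.
  by apply/set0Pn; rewrite -card_gt0; rewrite (cardsD1 u) uM in M_ge2.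
case/connectP: (M_conn uM vM) => [[|y p]] /=.
  by move=> _ vu; rewrite vu eqxx in v'u.
case/andP=> /and3P[_ yM]; rewrite /Defs.comparable !P_W => comp_uy _ _.
exists y => //.
by apply: contraTneq comp_uy => ->; rewrite properxx.
Qed.

Lemma incomp_graph_disconnected :
  2 <= #|M| -> disconnected_on (incomp_graph_on P M) M.
Proof.
move=> M_ge2; have [u0 u0M] : exists u0, u0 \in M.
  by apply/set0Pn; rewrite -card_gt0 (leq_trans _ M_ge2).
have [u uM u_least] := exists_least_path u0M.
have [v vM W'vu] := exists_other_path M_ge2 uM.
exists u, v; split=> //.
by apply: contra W'vu => /(incomp_connect_least uM u_least) ->.
Qed.
End LeastPath.

Theorem mainTheorem9 (X : finType) (P : rel X) (M : {set X}) :
  strict_order P ->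
  dually_CPT P ->
  strong_module P M ->
  2 <= #|M| ->
  (exists (V : finType) (e : rel V) (W : X -> {set V}),
      CPT_rep P e W /\ one_sided e W M) ->
  connected_on (comp_graph_on P M) M ->
  clique_module P M.
Proof.
move=> _ _ M_strong M_ge2 [V [e [W [[e_tree W_path P_W] one_sided_M]]]] M_conn.
split=> //; case: e_tree => e_sym _ _ e_acyclic.
have [a [_ [_ a_end _ _]]] := one_sided_M.
have rooted x : x \in M -> path_from e a (W x).
  by move=> xM; apply: endpoint_path_from (W_path x) (a_end x xM).
apply: (incomp_graph_disconnected P_W _ M_conn M_ge2) => x y z xM yM zM.
by apply: (path_from_nested e_sym e_acyclic); apply: rooted.
Qed.
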